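(* For all containers $F$ and $G$ there are equivalences of containers (i) $\partial(F+G)\simeq \partial F+\partial G$ (sum rule), and (ii) $\partial(F\times G)\simeq (\partial F\times G)+(F\times\partial G)$ (Leibniz rule).
   Context: Homotopy Type Theory. A point $a:A$ is isolated if $a=b$ is decidable for all $b:A$; $A^{\circ}$ is the subtype of isolated points; $A\setminus a_0:=\sum_{a:A}\neg(a_0=a)$. A container $(S\triangleleft P)$ is a type $S$ with a family $P:S\to\mathsf{Type}$ (no truncation assumptions). A cartesian morphism $(S\triangleleft P)\multimap(T\triangleleft Q)$ is a pair $(f,u)$ with $f:S\to T$, $u:\prod_s Q_{fs}\simeq P_s$; it is an equivalence of containers if $f$ is an equivalence. Operations: $(S\triangleleft P)\times(T\triangleleft Q):=(S\times T\triangleleft\lambda(s,t).\,P_s+Q_t)$; $(S\triangleleft P)+(T\triangleleft Q):=(S+T\triangleleft \lambda x.\,P_s \text{ if } x=\mathrm{inl}(s),\ Q_t\text{ if }x=\mathrm{inr}(t))$; $\partial(S\triangleleft P):=\big(\sum_{s:S}(P_s)^{\circ}\triangleleft\lambda(s,p).\,P_s\setminus p\big)$. *)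

(* Homotopy-type-theoretic notions, with a proof-relevant
   identity type living in Type (no UIP / truncation assumed). *)

Inductive paths {A : Type} (a : A) : A -> Type :=
  idpath : paths a a.
Arguments idpath {A a}.

Definition neg (A : Type) : Type := A -> Empty_set.

Definition Dec (A : Type) : Type := (A + neg A)%type.

Definition isolated {A : Type} (a : A) : Type := forall b : A, Dec (paths a b).

Definition isolated_pts (A : Type) : Type := { a : A & isolated a }.

Definition remove (A : Type) (a0 : A) : Type := { a : A & neg (paths a0 a) }.

Definition isequiv {A B : Type} (f : A -> B) : Type :=
  ({ g : B -> A & forall b, paths (f (g b)) b } *
   { h : B -> A & forall a, paths (h (f a)) a })%type.

Definition Equiv (A B : Type) : Type := { f : A -> B & isequiv f }.

Record Container : Type := mkContainer { Sh : Type ; Pos : Sh -> Type }.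

Definition CartMor (F G : Container) : Type :=
  { f : Sh F -> Sh G & forall s : Sh F, Equiv (Pos G (f s)) (Pos F s) }.

Definition CEquiv (F G : Container) : Type :=
  { f : Sh F -> Sh G &
    (isequiv f * forall s : Sh F, Equiv (Pos G (f s)) (Pos F s))%type }.

Definition cprod (F G : Container) : Container :=
  mkContainer (Sh F * Sh G)%type
              (fun st => (Pos F (fst st) + Pos G (snd st))%type).

Definition csum (F G : Container) : Container :=
  mkContainer (Sh F + Sh G)%type
              (fun x => match x with
                        | inl s => Pos F s
                        | inr t => Pos G t
                        end).

Definition cderiv (F : Container) : Container :=
  mkContainer { s : Sh F & isolated_pts (Pos F s) }
              (fun sp => remove (Pos F (projT1 sp)) (projT1 (projT2 sp))).

(** An isolated point of [P s + Q t] is an isolated point of [P s] or of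
    [Q t], and conversely.  Being isolated is a proposition (a point with
    decidable equality has propositional paths, by Hedberg's argument), so
    this correspondence is an equivalence, and it makes the shapes of
    [∂(F × G)] split as those of [∂F × G + F × ∂G].  Removing an isolated
    point [inl p] from [P s + Q t] leaves [(P s \ p) + Q t], which gives the
    positions.  The sum rule is just the distribution of [Σ] over [+]. *)

From Stdlib Require Import FunctionalExtensionality Eqdep_dec.

Definition paths_of_eq {A : Type} {x y : A} (e : x = y) : paths x y :=
  match e in _ = z return paths x z with eq_refl => idpath end.

Definition eq_of_paths {A : Type} {x y : A} (p : paths x y) : x = y :=
  match p in paths _ z return x = z with idpath => eq_refl end.

Lemma paths_of_eq_of_paths {A : Type} {x y : A} (p : paths x y) :
  paths_of_eq (eq_of_paths p) = p.
Proof. now destruct p. Qed.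

Definition ap {A B : Type} (f : A -> B) {x y : A} (p : paths x y) :
  paths (f x) (f y) :=
  match p in paths _ z return paths (f x) (f z) with idpath => idpath end.

Definition isequiv_of_inverse {A B : Type} (f : A -> B) (g : B -> A)
  (fg : forall b, f (g b) = b) (gf : forall a, g (f a) = a) : isequiv f :=
  (existT _ g (fun b => paths_of_eq (fg b)),
   existT _ g (fun a => paths_of_eq (gf a))).

Definition equiv_of_inverse {A B : Type} (f : A -> B) (g : B -> A)
  (fg : forall b, f (g b) = b) (gf : forall a, g (f a) = a) : Equiv A B :=
  existT _ f (isequiv_of_inverse f g fg gf).

Definition equiv_idmap (A : Type) : Equiv A A :=
  equiv_of_inverse (fun a => a) (fun a => a) (fun _ => eq_refl) (fun _ => eq_refl).

Definition cequiv_of_inverse {F G : Container}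
  (f : Sh F -> Sh G) (g : Sh G -> Sh F)
  (fg : forall t, f (g t) = t) (gf : forall s, g (f s) = s)
  (u : forall s, Equiv (Pos G (f s)) (Pos F s)) : CEquiv F G :=
  existT _ f (isequiv_of_inverse f g fg gf, u).

Lemma neg_eq {X : Type} (n m : neg X) : n = m.
Proof. apply functional_extensionality; intro x; destruct (n x). Qed.

Definition dec_of_iff {X Y : Type} (f : X -> Y) (g : Y -> X) (d : Dec X) : Dec Y :=
  match d with
  | inl x => inl (f x)
  | inr n => inr (fun y => n (g y))
  end.

Section Isolated.
Context {A : Type} {a : A}.

Lemma paths_hprop_of_isolated (k : isolated a) (b : A) (p q : paths a b) : p = q.
Proof.
  rewrite <- (paths_of_eq_of_paths p), <- (paths_of_eq_of_paths q).
  f_equal; apply eq_proofs_unicity_on; intro y.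
  destruct (k y) as [r|n].
  - left; exact (eq_of_paths r).
  - right; intro e; destruct (n (paths_of_eq e)).
Qed.

Lemma isolated_hprop (k k' : isolated a) : k = k'.
Proof.
  apply functional_extensionality_dep; intro b.
  destruct (k b) as [p|n], (k' b) as [p'|n'].
  - f_equal; apply (paths_hprop_of_isolated k).
  - destruct (n' p).
  - destruct (n p').
  - f_equal; apply neg_eq.
Qed.

End Isolated.

Section CoproductPaths.
Context {A B : Type}.

(* Decoding half of the encode–decode description of paths in [A + B]. *)
Definition sum_code (x y : A + B) : Type :=
  match x, y with
  | inl a, inl a' => paths a a'
  | inr b, inr b' => paths b b'
  | _, _ => Empty_set
  end.

Definition sum_decode {x y : A + B} (p : paths x y) : sum_code x y :=
  match p in paths _ z return sum_code x z with
  | idpath => match x return sum_code x x with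
              | inl _ => idpath
              | inr _ => idpath
              end
  end.

Definition inl_paths_inj {a a' : A} (q : paths (@inl A B a) (inl a')) : paths a a' :=
  sum_decode q.

Definition inr_paths_inj {b b' : B} (q : paths (@inr A B b) (inr b')) : paths b b' :=
  sum_decode q.

Definition inl_inr_paths_neq {a : A} {b : B} : neg (paths (inl a) (inr b)) :=
  fun q => sum_decode q.

Definition inr_inl_paths_neq {a : A} {b : B} : neg (paths (inr b) (inl a)) :=
  fun q => sum_decode q.

Definition isolated_of_inl {a : A} (k : isolated (@inl A B a)) : isolated a :=
  fun b => dec_of_iff inl_paths_inj (ap inl) (k (inl b)).

Definition isolated_of_inr {b : B} (k : isolated (@inr A B b)) : isolated b :=
  fun b' => dec_of_iff inr_paths_inj (ap inr) (k (inr b')).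

Definition inl_isolated {a : A} (h : isolated a) : isolated (@inl A B a) :=
  fun y => match y return Dec (paths (inl a) y) with
           | inl a' => dec_of_iff (ap inl) inl_paths_inj (h a')
           | inr _ => inr inl_inr_paths_neq
           end.

Definition inr_isolated {b : B} (h : isolated b) : isolated (@inr A B b) :=
  fun y => match y return Dec (paths (inr b) y) with
           | inl _ => inr inr_inl_paths_neq
           | inr b' => dec_of_iff (ap inr) inr_paths_inj (h b')
           end.

Definition isolated_pts_sum_split (x : isolated_pts (A + B)) :
  isolated_pts A + isolated_pts B :=
  match x with
  | existT _ (inl a) k => inl (existT _ a (isolated_of_inl k))
  | existT _ (inr b) k => inr (existT _ b (isolated_of_inr k))
  end.

Definition isolated_pts_sum_join (z : isolated_pts A + isolated_pts B) :
  isolated_pts (A + B) :=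
  match z with
  | inl (existT _ a h) => existT _ (inl a) (inl_isolated h)
  | inr (existT _ b h) => existT _ (inr b) (inr_isolated h)
  end.

Lemma isolated_pts_sum_split_join (z : isolated_pts A + isolated_pts B) :
  isolated_pts_sum_split (isolated_pts_sum_join z) = z.
Proof. destruct z as [[a h]|[b h]]; cbn; do 2 f_equal; apply isolated_hprop. Qed.

Lemma isolated_pts_sum_join_split (x : isolated_pts (A + B)) :
  isolated_pts_sum_join (isolated_pts_sum_split x) = x.
Proof. destruct x as [[a|b] k]; cbn; f_equal; apply isolated_hprop. Qed.

Definition remove_inl_equiv (p : A) :
  Equiv (remove A p + B) (remove (A + B) (inl p)).
Proof.
  refine (@equiv_of_inverse (remove A p + B) (remove (A + B) (inl p))
    (fun z => match z with
     | inl (existT _ a n) => existT _ (inl a) (fun q => n (inl_paths_inj q))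
     | inr b => existT _ (inr b) inl_inr_paths_neq
     end)
    (fun y => match y with
     | existT _ (inl a) n => inl (existT _ a (fun q => n (ap inl q)))
     | existT _ (inr b) _ => inr b
     end) _ _).
  - intros [[a|b] n]; cbn; f_equal; apply neg_eq.
  - intros [[a n]|b]; cbn; repeat f_equal; apply neg_eq.
Defined.

Definition remove_inr_equiv (p : B) :
  Equiv (A + remove B p) (remove (A + B) (inr p)).
Proof.
  refine (@equiv_of_inverse (A + remove B p) (remove (A + B) (inr p))
    (fun z => match z with
     | inl a => existT _ (inl a) inr_inl_paths_neq
     | inr (existT _ b n) => existT _ (inr b) (fun q => n (inr_paths_inj q))
     end)
    (fun y => match y with
     | existT _ (inl a) _ => inl a
     | existT _ (inr b) n => inr (existT _ b (fun q => n (ap inr q)))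
     end) _ _).
  - intros [[a|b] n]; cbn; f_equal; apply neg_eq.
  - intros [a|[b n]]; cbn; repeat f_equal; apply neg_eq.
Defined.

End CoproductPaths.

Section SigmaSum.
Context {A B : Type} {P : A + B -> Type}.

Definition sigT_sum_split (x : {y : A + B & P y}) :
  ({a : A & P (inl a)} + {b : B & P (inr b)})%type :=
  match x with
  | existT _ (inl a) u => inl (existT _ a u)
  | existT _ (inr b) u => inr (existT _ b u)
  end.

Definition sigT_sum_join (z : ({a : A & P (inl a)} + {b : B & P (inr b)})%type) :
  {y : A + B & P y} :=
  match z with
  | inl (existT _ a u) => existT _ (inl a) u
  | inr (existT _ b u) => existT _ (inr b) u
  end.

Lemma sigT_sum_split_join z : sigT_sum_split (sigT_sum_join z) = z.
Proof. now destruct z as [[a u]|[b u]]. Qed.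

Lemma sigT_sum_join_split x : sigT_sum_join (sigT_sum_split x) = x.
Proof. now destruct x as [[a|b] u]. Qed.

End SigmaSum.

Definition cderiv_csum (F G : Container) :
  CEquiv (cderiv (csum F G)) (csum (cderiv F) (cderiv G)).
Proof.
  refine (@cequiv_of_inverse (cderiv (csum F G)) (csum (cderiv F) (cderiv G))
            (sigT_sum_split (P := fun y => isolated_pts (Pos (csum F G) y)))
            sigT_sum_join sigT_sum_split_join sigT_sum_join_split _).
  intros [[s|t] i]; apply equiv_idmap.
Defined.

Section Leibniz.
Context (F G : Container).

Definition cderiv_cprod_shape (x : Sh (cderiv (cprod F G))) :
  Sh (csum (cprod (cderiv F) G) (cprod F (cderiv G))) :=
  match x with
  | existT _ (s, t) i =>
      match isolated_pts_sum_split i with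
      | inl a => inl (existT _ s a, t)
      | inr b => inr (s, existT _ t b)
      end
  end.

Definition cderiv_cprod_shape_inv
  (z : Sh (csum (cprod (cderiv F) G) (cprod F (cderiv G)))) :
  Sh (cderiv (cprod F G)) :=
  match z with
  | inl (existT _ s a, t) =>
      existT _ (s, t) (isolated_pts_sum_join (inl a))
  | inr (s, existT _ t b) =>
      existT _ (s, t) (isolated_pts_sum_join (inr b))
  end.

Lemma cderiv_cprod_shape_inv_shape z :
  cderiv_cprod_shape (cderiv_cprod_shape_inv z) = z.
Proof.
  destruct z as [[[s a] t]|[s [t b]]];
    cbn [cderiv_cprod_shape cderiv_cprod_shape_inv];
    now rewrite isolated_pts_sum_split_join.
Qed.

Lemma cderiv_cprod_shape_shape_inv x :
  cderiv_cprod_shape_inv (cderiv_cprod_shape x) = x.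
Proof.
  destruct x as [[s t] i]; cbn [cderiv_cprod_shape].
  destruct (isolated_pts_sum_split i) as [a|b] eqn:E;
    cbn [cderiv_cprod_shape_inv]; f_equal;
    now rewrite <- (isolated_pts_sum_join_split i), E.
Qed.

Definition cderiv_cprod :
  CEquiv (cderiv (cprod F G)) (csum (cprod (cderiv F) G) (cprod F (cderiv G))).
Proof.
  refine (cequiv_of_inverse cderiv_cprod_shape cderiv_cprod_shape_inv
            cderiv_cprod_shape_inv_shape cderiv_cprod_shape_shape_inv _).
  intros [[s t] [[p|q] h]]; cbn.
  - apply remove_inl_equiv.
  - apply remove_inr_equiv.
Defined.

End Leibniz.

Theorem proposition3p14 (F G : Container) :
  (CEquiv (cderiv (csum F G)) (csum (cderiv F) (cderiv G)) *
   CEquiv (cderiv (cprod F G))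
          (csum (cprod (cderiv F) G) (cprod F (cderiv G))))%type.
Proof.
  exact (cderiv_csum F G, cderiv_cprod F G).
Qed.
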